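(* If $S$ is a T2R semigroup, with $S=S_0\cup S_1$ as in the definition, then there is an element $b\in S_0$ such that $|J_b|=2$.
   Context: A semigroup $S$ is a $\Delta$-semigroup if the lattice of all congruences of $S$ is a chain with respect to inclusion. A semigroup $N$ with zero $0$ is nil if every element has some power equal to $0$; non-trivial means having more than one element. A T2R semigroup is a $\Delta$-semigroup $S$ which is the disjoint union of a non-trivial nil ideal $S_0$ (with zero $0$, which is then the zero of $S$) and a subsemigroup $S_1$ which is a two-element right zero semigroup (i.e. $S_1=\{u,v\}$ with $xy=y$ for $x,y\in S_1$). $S^1$ denotes $S$ with an identity $1$ adjoined. For $a\in S$: $J(a)=S^1aS^1$ and $J_a=\{s\in S:J(s)=J(a)\}$. *)

Set Implicit Arguments.

Section Semigroup.
Variable T : Type.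
Variable mul : T -> T -> T.

Definition associative_op : Prop :=
  forall x y z, mul x (mul y z) = mul (mul x y) z.

Definition is_congruence (r : T -> T -> Prop) : Prop :=
  (forall x, r x x) /\
  (forall x y, r x y -> r y x) /\
  (forall x y z, r x y -> r y z -> r x z) /\
  (forall x y c, r x y -> r (mul c x) (mul c y) /\ r (mul x c) (mul y c)).

Definition delta_semigroup : Prop :=
  forall r s, is_congruence r -> is_congruence s ->
    (forall x y, r x y -> s x y) \/ (forall x y, s x y -> r x y).

(* pow_succ x n = x^(n+1) *)
Fixpoint pow_succ (x : T) (n : nat) : T :=
  match n with
  | O => x
  | S k => mul x (pow_succ x k)
  end.

(* S^1 : S with an identity adjoined, modelled as option T (None = 1). *)
Definition lmul1 (p : option T) (x : T) : T :=
  match p with None => x | Some a => mul a x end.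
Definition rmul1 (x : T) (q : option T) : T :=
  match q with None => x | Some a => mul x a end.

(* x \in J(a) = S^1 a S^1 *)
Definition inJ (a x : T) : Prop :=
  exists p q : option T, x = lmul1 p (rmul1 a q).

Definition inJclass (a s : T) : Prop :=
  forall x, inJ s x <-> inJ a x.

(* S is a T2R semigroup with decomposition S = S0 u S1, S1 = {u, v}, zero z. *)
Definition T2R (S0 : T -> Prop) (u v z : T) : Prop :=
  associative_op /\ delta_semigroup /\
  (forall x, S0 x \/ x = u \/ x = v) /\
  ~ S0 u /\ ~ S0 v /\
  u <> v /\
  mul u u = u /\ mul u v = v /\ mul v u = u /\ mul v v = v /\
  (forall x y, S0 x -> S0 (mul x y) /\ S0 (mul y x)) /\
  S0 z /\ (forall x, S0 x -> mul z x = z /\ mul x z = z) /\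
  (forall x, S0 x -> exists n, pow_succ x n = z) /\
  (exists x, S0 x /\ x <> z).

End Semigroup.

From Stdlib Require Import Classical.

(* The argument has two halves.
   (1) Some e ∈ S0 separates u and v: e u <> e v.  Otherwise three explicit
       congruences, each identifying u with v, must (S being a Δ-semigroup)
       contain the Rees congruence of S0; the first forces S0 = S·S0 ∪ {0},
       the second forces S0·S0 = 0, and together these make "identify u with
       v" a congruence, which then would collapse the non-trivial S0.
   (2) With a = e u and c = e v we have a u = a, a v = c, c u = a, so
       J_a ⊇ {a, c}.  Conversely, since S0 is nil, a non-zero a cannot be
       written a = p a q with p or q in S0; hence every s ∈ J_a has the form
       p a q with p, q ∈ {1, u, v}, and such products are a or c. *)

Section Congruences.
Variable T : Type.
Variable mul : T -> T -> T.
Local Notation "x ** y" := (mul x y) (at level 40, left associativity).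

Definition one_block (A : T -> Prop) (x y : T) : Prop := x = y \/ (A x /\ A y).

Definition two_blocks (A B : T -> Prop) (x y : T) : Prop :=
  x = y \/ (A x /\ A y) \/ (B x /\ B y).

Definition left_equalizer (A : T -> Prop) (x y : T) : Prop :=
  forall s, A s -> s ** x = s ** y.

Lemma one_block_congruence A :
  (forall x y m, A x -> A y ->
     one_block A (m ** x) (m ** y) /\ one_block A (x ** m) (y ** m)) ->
  is_congruence mul (one_block A).
Proof.
  intros compat; unfold one_block; split; [|split; [|split]].
  - auto.
  - intros x y [->|[]]; auto.
  - intros x y w [->|[]] [->|[]]; auto.
  - intros x y m [->|[Ax Ay]]; [split; left; reflexivity | exact (compat x y m Ax Ay)].
Qed.

Lemma two_blocks_congruence A B :
  (forall x, A x -> B x -> False) ->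
  (forall x y m, A x -> A y ->
     two_blocks A B (m ** x) (m ** y) /\ two_blocks A B (x ** m) (y ** m)) ->
  (forall x y m, B x -> B y ->
     two_blocks A B (m ** x) (m ** y) /\ two_blocks A B (x ** m) (y ** m)) ->
  is_congruence mul (two_blocks A B).
Proof.
  intros disj compatA compatB; unfold two_blocks; split; [|split; [|split]].
  - auto.
  - intros x y [->|[[]|[]]]; auto.
  - intros x y w [->|[[]|[]]] [->|[[]|[]]]; auto; try tauto;
      exfalso; apply (disj y); assumption.
  - intros x y m [->|[[Ax Ay]|[Bx By]]];
      [split; left; reflexivity | exact (compatA x y m Ax Ay) | exact (compatB x y m Bx By)].
Qed.

Lemma left_equalizer_congruence A :
  associative_op mul -> (forall s m, A s -> A (s ** m)) ->
  is_congruence mul (left_equalizer A).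
Proof.
  intros assoc closed; unfold left_equalizer; split; [|split; [|split]].
  - auto.
  - intros x y H s As; symmetry; auto.
  - intros x y w H1 H2 s As; rewrite H1, H2; auto.
  - intros x y m H; split; intros s As; rewrite !assoc.
    + apply H, closed, As.
    + rewrite H; auto.
Qed.

End Congruences.

Arguments one_block {T}.
Arguments two_blocks {T}.
Arguments left_equalizer {T}.
Arguments one_block_congruence {T mul}.
Arguments two_blocks_congruence {T mul}.
Arguments left_equalizer_congruence {T mul}.

Section Jorder.
Variable T : Type.
Variable mul : T -> T -> T.
Hypothesis assoc : associative_op mul.
Local Notation "x ** y" := (mul x y) (at level 40, left associativity).
Local Notation L := (lmul1 mul).
Local Notation R := (rmul1 mul).

Definition mul1 (p p' : option T) : option T :=
  match p, p' with
  | None, _ => p'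
  | Some a, None => Some a
  | Some a, Some b => Some (a ** b)
  end.

Lemma lmul1_assoc p x y : L p (x ** y) = L p x ** y.
Proof. destruct p; simpl; [apply assoc | reflexivity]. Qed.

Lemma rmul1_assoc x y q : R (x ** y) q = x ** R y q.
Proof. destruct q; simpl; [symmetry; apply assoc | reflexivity]. Qed.

Lemma lrmul1_comp p q p' q' a :
  L p' (R (L p (R a q)) q') = L (mul1 p' p) (R a (mul1 q q')).
Proof. destruct p, q, p', q'; simpl; rewrite ?assoc; reflexivity. Qed.

Lemma inJ_refl a : inJ mul a a.
Proof. exists None, None; reflexivity. Qed.

Lemma inJ_trans a x y : inJ mul a x -> inJ mul x y -> inJ mul a y.
Proof.
  intros [p [q ->]] [p' [q' ->]].
  exists (mul1 p' p), (mul1 q q'). apply lrmul1_comp.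
Qed.

Lemma inJclass_iff a s : inJclass mul a s <-> inJ mul a s /\ inJ mul s a.
Proof.
  split.
  - intros H; split; [apply (H s), inJ_refl | apply (H a), inJ_refl].
  - intros [Has Hsa] x; split; intro Hx; eapply inJ_trans; eassumption.
Qed.

Lemma pow_succ_comm x k : pow_succ mul x k ** x = x ** pow_succ mul x k.
Proof. induction k; simpl; [reflexivity | rewrite <- assoc, IHk; reflexivity]. Qed.

(* If a = m (a q) then a ∈ m^n S^1 for all n; so a = 0 when m is nilpotent. *)
Lemma nilpotent_left_factor (z m a : T) (q : option T) (n : nat) :
  (forall x, z ** x = z) -> pow_succ mul m n = z -> a = m ** R a q -> a = z.
Proof.
  intros zl mn Ha.
  assert (powers : forall k, exists t, a = pow_succ mul m k ** t).
  { induction k as [|k [t Ht]].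
    - exists (R a q); exact Ha.
    - exists (R t q). simpl. rewrite <- assoc, <- rmul1_assoc, <- Ht. exact Ha. }
  destruct (powers n) as [t ->]. rewrite mn; apply zl.
Qed.

Lemma nilpotent_right_factor (z m a : T) (p : option T) (n : nat) :
  (forall x, x ** z = z) -> pow_succ mul m n = z -> a = L p (a ** m) -> a = z.
Proof.
  intros zr mn Ha.
  assert (powers : forall k, exists t, a = t ** pow_succ mul m k).
  { induction k as [|k [t Ht]].
    - exists (L p a). rewrite <- lmul1_assoc; exact Ha.
    - exists (L p t). simpl. rewrite <- pow_succ_comm, assoc, <- lmul1_assoc, <- Ht,
      <- lmul1_assoc. exact Ha. }
  destruct (powers n) as [t ->]. rewrite mn; apply zr.
Qed.

End Jorder.

Arguments mul1 {T}.
Arguments lrmul1_comp {T mul}.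
Arguments rmul1_assoc {T mul}.
Arguments inJ_refl {T mul}.
Arguments inJclass_iff {T mul}.
Arguments nilpotent_left_factor {T mul}.
Arguments nilpotent_right_factor {T mul}.

Section T2R.
Variable T : Type.
Variable mul : T -> T -> T.
Variables (S0 : T -> Prop) (u v z : T).
Hypothesis assoc : associative_op mul.
Hypothesis delta : delta_semigroup mul.
Hypothesis cover : forall x, S0 x \/ x = u \/ x = v.
Hypothesis u_notin : ~ S0 u.
Hypothesis v_notin : ~ S0 v.
Hypothesis u_neq_v : u <> v.
Hypothesis uu : mul u u = u.
Hypothesis uv : mul u v = v.
Hypothesis vu : mul v u = u.
Hypothesis vv : mul v v = v.
Hypothesis ideal : forall x y, S0 x -> S0 (mul x y) /\ S0 (mul y x).
Hypothesis z_in : S0 z.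
Hypothesis z_zero : forall x, S0 x -> mul z x = z /\ mul x z = z.
Hypothesis nil : forall x, S0 x -> exists n, pow_succ mul x n = z.
Hypothesis nontrivial : exists x, S0 x /\ x <> z.

Local Notation "x ** y" := (mul x y) (at level 40, left associativity).
Local Notation L := (lmul1 mul).
Local Notation R := (rmul1 mul).

Lemma ideal_r x y : S0 x -> S0 (x ** y).
Proof. intro Hx; exact (proj1 (ideal x y Hx)). Qed.

Lemma ideal_l x y : S0 x -> S0 (y ** x).
Proof. intro Hx; exact (proj2 (ideal x y Hx)). Qed.

(* The zero of S0 is a zero of the whole of S, since S0 is an ideal. *)
Lemma zero_l x : z ** x = z.
Proof.
  transitivity (z ** (z ** x)).
  - rewrite assoc, (proj1 (z_zero z z_in)); reflexivity.
  - exact (proj1 (z_zero _ (ideal_r z x z_in))).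
Qed.

Lemma zero_r x : x ** z = z.
Proof.
  transitivity ((x ** z) ** z).
  - rewrite <- assoc, (proj1 (z_zero z z_in)); reflexivity.
  - exact (proj2 (z_zero _ (ideal_l z x z_in))).
Qed.

Definition S1 (x : T) : Prop := x = u \/ x = v.

Lemma S1_right_zero p x : S1 p -> S1 x -> p ** x = x.
Proof. intros [-> | ->] [-> | ->]; assumption. Qed.

Lemma rees_below θ :
  is_congruence mul θ -> θ u v -> forall x y, S0 x -> S0 y -> θ x y.
Proof.
  intros Cθ θuv.
  assert (rees : is_congruence mul (one_block S0)).
  { apply one_block_congruence; intros x y m Sx Sy.
    split; right; split; auto using ideal_l, ideal_r. }
  destruct (delta _ _ Cθ rees) as [θ_rees | rees_θ].
  - destruct (θ_rees u v θuv) as [E | [Su _]]; contradiction.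
  - intros x y Sx Sy; apply rees_θ; right; auto.
Qed.

Section NoSeparatingElement.
Hypothesis no_sep : forall e, S0 e -> e ** u = e ** v.

Lemma S0_mul_S1 m x y : S0 m -> S1 x -> S1 y -> m ** x = m ** y.
Proof. intros Sm [-> | ->] [-> | ->]; auto; symmetry; auto. Qed.

Definition left_multiple (x : T) : Prop := exists s y, S0 y /\ x = s ** y.

Lemma left_multiple_S0 x : left_multiple x -> S0 x.
Proof. intros (s & y & Sy & ->); apply ideal_l, Sy. Qed.

Lemma S1_and_multiples_congruence : is_congruence mul (two_blocks S1 left_multiple).
Proof.
  apply two_blocks_congruence.
  - intros x [-> | ->] Ix; apply left_multiple_S0 in Ix; contradiction.
  - intros x y m S1x S1y; unfold two_blocks. split.
    + destruct (cover m) as [Sm | S1m].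
      * left; apply S0_mul_S1; assumption.
      * right; left; rewrite !S1_right_zero; auto.
    + destruct (cover m) as [Sm | S1m].
      * right; right; split; [exists x | exists y]; exists m; auto.
      * left; rewrite !S1_right_zero; auto.
  - intros x y m (s1 & y1 & Sy1 & ->) (s2 & y2 & Sy2 & ->); unfold two_blocks.
    split; right; right; split.
    + exists (m ** s1), y1; split; auto; apply assoc.
    + exists (m ** s2), y2; split; auto; apply assoc.
    + exists s1, (y1 ** m); split; [apply ideal_r, Sy1 | symmetry; apply assoc].
    + exists s2, (y2 ** m); split; [apply ideal_r, Sy2 | symmetry; apply assoc].
Qed.

(* By rees_below this congruence contains S0 × S0, so S0 = S·S0 ∪ {0}. *)
Lemma S0_left_multiple x : S0 x -> x = z \/ left_multiple x.
Proof.
  intros Sx.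
  assert (uv_related : two_blocks S1 left_multiple u v)
    by (right; left; split; [left | right]; reflexivity).
  destruct (rees_below _ S1_and_multiples_congruence uv_related x z Sx z_in)
    as [E | [[_ [E | E]] | [Ix _]]].
  - left; exact E.
  - rewrite <- E in u_notin; contradiction.
  - rewrite <- E in v_notin; contradiction.
  - right; exact Ix.
Qed.

(* left_equalizer S0 identifies u with v; hence S0·S0 = 0. *)
Lemma S0_null s x : S0 s -> S0 x -> s ** x = z.
Proof.
  intros Ss Sx.
  assert (C := left_equalizer_congruence S0 assoc ideal_r).
  rewrite (rees_below _ C no_sep x z Sx z_in s Ss). apply zero_r.
Qed.

Lemma S1_act_left x : S0 x -> u ** x = v ** x.
Proof.
  intros Sx. destruct (S0_left_multiple x Sx) as [-> | (s & y & Sy & ->)].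
  - rewrite !zero_r; reflexivity.
  - destruct (cover s) as [Ss | [-> | ->]].
    + rewrite (S0_null s y), !zero_r by assumption; reflexivity.
    + rewrite !assoc, uu, vu; reflexivity.
    + rewrite !assoc, uv, vv; reflexivity.
Qed.

Lemma S1_collapse_congruence : is_congruence mul (one_block S1).
Proof.
  apply one_block_congruence; intros x y m S1x S1y; unfold one_block. split.
  - destruct (cover m) as [Sm | S1m].
    + left; apply S0_mul_S1; assumption.
    + right; rewrite !S1_right_zero; auto.
  - left. destruct (cover m) as [Sm | S1m].
    + destruct S1x as [-> | ->], S1y as [-> | ->];
        auto using S1_act_left; symmetry; auto using S1_act_left.
    + rewrite !S1_right_zero; auto.
Qed.

(* By rees_below it would identify a non-zero element of S0 with 0. *)
Lemma no_separating_element_absurd : False.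
Proof.
  destruct nontrivial as [x [Sx x_neq_z]].
  assert (uv_related : one_block S1 u v)
    by (right; split; [left | right]; reflexivity).
  destruct (rees_below _ S1_collapse_congruence uv_related x z Sx z_in)
    as [E | [_ [E | E]]].
  - contradiction.
  - rewrite E in z_in; contradiction.
  - rewrite E in z_in; contradiction.
Qed.

End NoSeparatingElement.

Lemma separating_element : exists e, S0 e /\ e ** u <> e ** v.
Proof.
  apply NNPP; intro none.
  apply no_separating_element_absurd; intros e Se.
  apply NNPP; intro neq; apply none; eauto.
Qed.

Lemma inJ_zero x : inJ mul z x -> x = z.
Proof. intros [p [q ->]]; destruct p, q; simpl; rewrite ?zero_l, ?zero_r; reflexivity. Qed.

Definition S1_one (p : option T) : Prop := p = None \/ exists m, S1 m /\ p = Some m.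

(* Since S0 is nil: if s = p a q lies in J_a and a <> 0, then p, q ∈ {1, u, v}. *)
Lemma J_class_factors a s :
  a <> z -> inJ mul a s -> inJ mul s a ->
  exists p q, S1_one p /\ S1_one q /\ s = L p (R a q).
Proof.
  intros a_neq_z [p [q Hs]] [p' [q' Ha]].
  rewrite Hs, (lrmul1_comp assoc) in Ha.
  exists p, q; split; [|split]; auto.
  - destruct p as [m|]; [|left; reflexivity].
    destruct (cover m) as [Sm | S1m]; [|right; exists m; split; [exact S1m | reflexivity]].
    exfalso; apply a_neq_z.
    assert (Sk : S0 (match p' with Some t => t ** m | None => m end))
      by (destruct p'; auto using ideal_l).
    destruct (nil _ Sk) as [n Hn].
    apply (nilpotent_left_factor assoc z _ a (mul1 mul q q') n zero_l Hn).
    destruct p'; exact Ha.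
  - destruct q as [m|]; [|left; reflexivity].
    destruct (cover m) as [Sm | S1m]; [|right; exists m; split; [exact S1m | reflexivity]].
    exfalso; apply a_neq_z.
    assert (Sk : S0 (match q' with Some t => m ** t | None => m end))
      by (destruct q'; auto using ideal_r).
    destruct (nil _ Sk) as [n Hn].
    apply (nilpotent_right_factor assoc z _ a (mul1 mul p' p) n zero_r Hn).
    destruct q'; exact Ha.
Qed.

Lemma S1_left_absorb p m w : S1_one p -> S1 m -> L p (m ** w) = m ** w.
Proof.
  intros [-> | [m' [S1m' ->]]] S1m; simpl; [reflexivity|].
  rewrite assoc, (S1_right_zero m' m) by assumption; reflexivity.
Qed.

Section TwoElementClass.
Variable e : T.
Hypothesis e_sep : e ** u <> e ** v.

Let a := e ** u.
Let c := e ** v.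

Lemma a_u : a ** u = a.
Proof. unfold a; rewrite <- assoc, uu; reflexivity. Qed.

Lemma a_v : a ** v = c.
Proof. unfold a, c; rewrite <- assoc, uv; reflexivity. Qed.

Lemma c_u : c ** u = a.
Proof. unfold a, c; rewrite <- assoc, vu; reflexivity. Qed.

Lemma a_neq_z : a <> z.
Proof. intro E; apply e_sep; fold a c; rewrite <- a_v, E; symmetry; apply zero_l. Qed.

Lemma a_times_S1_one q : S1_one q -> R a q = a \/ R a q = c.
Proof. intros [-> | [m [[-> | ->] ->]]]; simpl; auto using a_u, a_v. Qed.

Lemma J_class_subset s : inJ mul a s -> inJ mul s a -> s = a \/ s = c.
Proof.
  intros Jas Jsa.
  destruct (J_class_factors a s a_neq_z Jas Jsa) as [p [q [Hp [Hq Hs]]]].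
  destruct Hp as [-> | [m [S1m ->]]]; simpl in Hs; rewrite Hs;
    [apply a_times_S1_one; exact Hq|].
  assert (s_neq_z : s <> z).
  { intros E; rewrite E in Jsa; exact (a_neq_z (inJ_zero a Jsa)). }
  (* a = p' (m a q) q' with p' ∈ {1, u, v}, so a = m (a q q') and m a = a. *)
  destruct (J_class_factors s a s_neq_z Jsa Jas) as [p' [q' [Hp' [_ Ha]]]].
  assert (ma : m ** a = a).
  { rewrite Hs, (rmul1_assoc assoc), S1_left_absorb in Ha by assumption.
    rewrite Ha, assoc, (S1_right_zero m m) by exact S1m; reflexivity. }
  rewrite <- (rmul1_assoc assoc), ma. apply a_times_S1_one; exact Hq.
Qed.

Lemma J_class_of_a : forall s, inJclass mul a s <-> (s = a \/ s = c).
Proof.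
  intros s; rewrite (inJclass_iff assoc); split.
  - intros [Jas Jsa]; apply J_class_subset; assumption.
  - assert (Jac : inJ mul a c) by (exists None, (Some v); symmetry; apply a_v).
    assert (Jca : inJ mul c a) by (exists None, (Some u); symmetry; apply c_u).
    intros [-> | ->]; split; auto using inJ_refl.
Qed.

End TwoElementClass.

Lemma two_element_J_class : exists b, S0 b /\
  exists c d, c <> d /\ (forall s, inJclass mul b s <-> (s = c \/ s = d)).
Proof.
  destruct separating_element as [e [Se sep]].
  exists (e ** u); split; [apply ideal_r, Se|].
  exists (e ** u), (e ** v); split; [exact sep | apply J_class_of_a; assumption].
Qed.

End T2R.

Theorem proposition4 (T : Type) (mul : T -> T -> T) (S0 : T -> Prop) (u v z : T) :
  T2R mul S0 u v z ->
  exists b, S0 b /\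
    exists c d, c <> d /\ (forall s, inJclass mul b s <-> (s = c \/ s = d)).
Proof.
  intros (assoc & delta & cover & u_notin & v_notin & u_neq_v & uu & uv & vu & vv
          & ideal & z_in & z_zero & nil & nontrivial).
  eapply two_element_J_class; eassumption.
Qed.
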